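(* Let $(X,d,f)$ be a topological dynamical system ($(X,d)$ compact metric, $f:X\to X$ continuous). Fix $\epsilon>0$, $\delta\in(0,1)$ and $n\in\mathbb N$. Then the function $\mathscr M_{\rm erg}(X,f)\to\mathbb R$, $\nu\mapsto N^\nu(n,\epsilon,\delta)$, is upper semi-continuous with respect to the weak* topology.
   Context: $\mathscr M_{\rm erg}(X,f)$ is the set of ergodic $f$-invariant Borel probability measures. $B_n(x,\epsilon)=\{y\in X:\max_{0\le i\le n-1}d(f^ix,f^iy)<\epsilon\}$. $N^\nu(n,\epsilon,\delta)$ is the minimal number of Bowen balls $B_n(x,\epsilon)$ whose union covers a set of $\nu$-measure larger than $1-\delta$. *)

From HB Require Import structures.
From mathcomp Require Import all_boot all_order all_algebra.
From mathcomp Require Import all_classical all_reals all_analysis.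
Set Implicit Arguments. Unset Strict Implicit. Unset Printing Implicit Defensive.
Import Order.TTheory GRing.Theory Num.Theory.
Local Open Scope classical_set_scope.
Local Open Scope ring_scope.

(* Pointedness is needed for MathComp-Analysis' generated sigma-algebra;
   for empty X there are no probability measures, so nothing is lost. *)
#[short(type="ptMetricType")]
HB.structure Definition PointedMetric (K : numDomainType) :=
  { M of Metric K M & Pointed M }.

Definition borel {R : realType} (X : ptMetricType R) := g_sigma_algebraType (@open X).

Section defs.
Context {R : realType} (X : ptMetricType R).

Definition f_invariant (f : X -> X) (mu : probability (borel X) R) : Prop :=
  forall A : set (borel X), measurable A -> mu (f @^-1` A) = mu A.

Definition f_ergodic (f : X -> X) (mu : probability (borel X) R) : Prop :=
  f_invariant f mu /\
  forall A : set (borel X), measurable A -> f @^-1` A = A ->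
    mu A = 0%E \/ mu A = 1%E.

Definition bowen_ball (f : X -> X) (n : nat) (x : X) (eps : R) : set X :=
  [set y | forall i, (i < n)%N -> mdist (iter i f x) (iter i f y) < eps].

Definition N_cover (f : X -> X) (n : nat) (eps delta : R)
    (nu : probability (borel X) R) : R :=
  inf [set (size s)%:R | s in
        [set s : seq X |
          ((1 - delta)%:E < nu (\bigcup_(x in [set` s]) bowen_ball f n x eps))%E]].

Definition weak_star_basic_nbhs (nu : probability (borel X) R)
    (k : nat) (g : 'I_k -> X -> R) (e : R) (mu : probability (borel X) R) : Prop :=
  forall i : 'I_k,
    (`| (\int[mu]_(x in setT) (g i x)%:E) - (\int[nu]_(x in setT) (g i x)%:E) |
      < e%:E)%E.

End defs.

From HB Require Import structures.
From mathcomp Require Import all_boot all_order all_algebra.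
From mathcomp Require Import all_classical all_reals all_analysis.
From mathcomp Require Import lra measurable_realfun.
Import Order.TTheory GRing.Theory Num.Theory numFieldNormedType.Exports.
Local Open Scope classical_set_scope.
Local Open Scope ring_scope.

(* Choose Bowen balls B_n(x, eps), x in s, realising N^nu below c.  Their union
   U is open and equals {h > 0} for the continuous "depth"
   h y = max_(x in s) (eps - d_n(x, y)).  By continuity from below, the bound
   nu(U) > 1 - delta is already witnessed by the integral of the continuous
   function g = min(1, m h) <= 1_U for m large, and every mu whose integral of g
   is close to that of nu then satisfies mu(U) >= int g dmu > 1 - delta, so
   N^mu <= |s| < c. *)

Section metric.
Context {R : realType} {X : metricType R}.

Lemma ler_dist_mdist (a y z : X) : `|mdist a y - mdist a z| <= mdist y z.
Proof.
have := metric_triangle a y z; have := metric_triangle a z y.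
rewrite (metric_sym z y) ler_norml; move=> *; apply/andP; split; lra.
Qed.

Lemma continuous_mdist (a : X) : continuous (mdist a).
Proof.
move=> y; apply/cvgrPdist_lt => e e0; near=> z.
apply: le_lt_trans (ler_dist_mdist a y z) _.
by near: z; move: (nbhsx_ballx y e e0); rewrite ballEmdist.
Unshelve. all: by end_near.
Qed.

End metric.

Lemma continuous_iter {T : topologicalType} (f : T -> T) :
  continuous f -> forall i, continuous (iter i f).
Proof.
move=> fc; elim=> [|i IH] y; first exact: cvg_id.
exact: (@continuous_comp _ _ _ (iter i f) f y (IH y) (fc _)).
Qed.

Lemma continuous_bigmax {T : topologicalType} {R : realType} {I : Type}
    (r : seq I) (x0 : R) (F : I -> T -> R) :
  (forall i, continuous (F i)) ->
  continuous (fun y => \big[Num.max/x0]_(i <- r) F i y).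
Proof.
move=> Fc; elim: r => [|i r IH] y.
  by under eq_fun do rewrite big_nil; exact: cvg_cst.
under eq_fun do rewrite big_cons.
exact: (@continuous_max R T (F i) _ y (Fc i y) (IH y)).
Qed.

Section bowen.
Context {R : realType} {X : ptMetricType R} (f : X -> X) (n : nat) (eps : R).
Hypotheses (fcont : continuous f) (eps_gt0 : 0 < eps).

Definition bowen_dist (x y : X) : R :=
  \big[Num.max/0]_(i < n) mdist (iter i f x) (iter i f y).

(* [0 < eps] matters for [n = 0]: the empty maximum is [0]. *)
Lemma bowen_ballE x : bowen_ball f n x eps = [set y | bowen_dist x y < eps].
Proof.
apply/seteqP; split=> y /=.
- by move=> xy; apply/bigmax_ltP; split=> // i _; exact: xy.
- by move=> /bigmax_ltP[_ xy] i lt_in; exact: (xy (Ordinal lt_in)).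
Qed.

Lemma continuous_bowen_dist x : continuous (bowen_dist x).
Proof.
apply: (continuous_bigmax (index_enum 'I_n) 0
  (fun (i : 'I_n) y => mdist (iter i f x) (iter i f y))) => i y.
apply: (@continuous_comp _ _ _ (iter i f) (mdist (iter i f x))).
  exact: continuous_iter.
exact: continuous_mdist.
Qed.

Lemma open_bowen_ball x : open (bowen_ball f n x eps).
Proof.
rewrite bowen_ballE.
exact: (continuousP _).1 (continuous_bowen_dist x) _ (@open_lt R eps).
Qed.

Lemma bowen_ball_center x : bowen_ball f n x eps x.
Proof. by move=> i _; rewrite mdistxx. Qed.

Definition bowen_cover (s : seq X) : set X :=
  \bigcup_(x in [set` s]) bowen_ball f n x eps.

Lemma open_bowen_cover s : open (bowen_cover s).
Proof. by apply: bigcup_open => x _; exact: open_bowen_ball. Qed.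

Lemma compact_bowen_cover : compact [set: X] -> exists s, bowen_cover s = setT.
Proof.
rewrite compact_cover => /(_ X setT (fun x => bowen_ball f n x eps)) cov.
have [F _ coverF] := cov (fun x _ => open_bowen_ball x) (fun y _ =>
  ex_intro2 setT (fun x => bowen_ball f n x eps y) y I (bowen_ball_center y)).
by exists (finmap.enum_fset F); apply/seteqP; split => // y _; exact: coverF.
Qed.

Definition bowen_depth (s : seq X) (y : X) : R :=
  \big[Num.max/0]_(x <- s) (eps - bowen_dist x y).

Lemma bowen_depth_ge0 s y : 0 <= bowen_depth s y.
Proof. exact: bigmax_ge_id. Qed.

Lemma continuous_bowen_depth s : continuous (bowen_depth s).
Proof.
apply: (continuous_bigmax _ _ (fun x y => eps - bowen_dist x y)) => x.
move=> y; apply: continuousB; first exact: cst_continuous.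
exact: continuous_bowen_dist.
Qed.

Lemma bowen_coverE s : bowen_cover s = [set y | 0 < bowen_depth s y].
Proof.
apply/seteqP; split=> y /=.
  move=> [x xs]; rewrite bowen_ballE /= -subr_gt0 => xy.
  by apply: lt_le_trans xy _; exact: (le_bigmax_seq _ _ _ _ xs).
rewrite /bowen_depth big_seq => depth_gt0; apply: contrapT => ycov.
move: depth_gt0; apply/negP; rewrite -leNgt; apply: bigmax_le => // x xs.
rewrite subr_le0 leNgt; apply/negP => xy; apply: ycov.
by exists x => //; rewrite bowen_ballE.
Qed.

End bowen.

Section indicator_bounds.
Context {d} {T : measurableType d} {R : realType}.
Local Open Scope ereal_scope.

Lemma integral_le_measure (mu : {measure set T -> \bar R}) (A : set T)
    (g : T -> R) :
  measurable A -> measurable_fun setT g ->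
  (forall y, 0 <= g y)%R -> (forall y, g y <= \1_A y)%R ->
  \int[mu]_(x in setT) (g x)%:E <= mu A.
Proof.
move=> mA mg g0 gA; rewrite -(setIT A) -integral_indic //.
apply: ge0_le_integral => //.
- by move=> y _; rewrite lee_fin.
- exact/measurable_EFinP.
- by apply/measurable_EFinP; exact: measurable_indic.
- by move=> y _; rewrite lee_fin.
Qed.

Lemma measure_le_integral (mu : {measure set T -> \bar R}) (A : set T)
    (g : T -> R) :
  measurable A -> measurable_fun setT g -> (forall y, \1_A y <= g y)%R ->
  mu A <= \int[mu]_(x in setT) (g x)%:E.
Proof.
move=> mA mg gA; rewrite -(setIT A) -integral_indic //.
apply: ge0_le_integral => //.
- by apply/measurable_EFinP; exact: measurable_indic.
- exact/measurable_EFinP.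
- by move=> y _; rewrite lee_fin.
Qed.

Lemma lt_probability_of_close_integral (P : probability T R) {A : set T}
    {g : T -> R} {t : R} :
  measurable A -> measurable_fun setT g ->
  (forall y, 0 <= g y)%R -> (forall y, g y <= \1_A y)%R ->
  t%:E < \int[P]_(x in setT) (g x)%:E ->
  exists2 e : R, (0 < e)%R & forall Q : probability T R,
    `|\int[Q]_(x in setT) (g x)%:E - \int[P]_(x in setT) (g x)%:E| < e%:E ->
    t%:E < Q A.
Proof.
move=> mA mg g0 gA t_lt.
have QgA (Q : probability T R) := integral_le_measure Q A g mA mg g0 gA.
have Qg_fin (Q : probability T R) : \int[Q]_(x in setT) (g x)%:E \is a fin_num.
  rewrite ge0_fin_numE; last by apply: integral_ge0 => y _; rewrite lee_fin.
  exact: le_lt_trans (QgA Q) (le_lt_trans (probability_le1 Q mA) (ltry 1)).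
exists (fine (\int[P]_(x in setT) (g x)%:E) - t)%R.
  by rewrite subr_gt0 -lte_fin fineK.
move=> Q; rewrite -(fineK (Qg_fin Q)) -(fineK (Qg_fin P)) -EFinB.
rewrite lte_fin ltr_norml.
move=> /andP[close _]; apply: lt_le_trans (QgA Q).
by rewrite -(fineK (Qg_fin Q)) lte_fin; lra.
Qed.

End indicator_bounds.

Section continuous_minorant.
Context {R : realType} {X : ptMetricType R}
  (nu : {measure set (borel X) -> \bar R}).

Lemma open_measurable_borel {U : set X} :
  open U -> measurable (U : set (borel X)).
Proof. exact: sub_sigma_algebra. Qed.

Lemma continuous_measurable_borel {g : X -> R} :
  continuous g -> measurable_fun (setT : set (borel X)) g.
Proof.
move=> gc; apply: (measurability _ (RGenOpens.measurableE R)).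
move=> _ [_ [a [b ->] <-]]; rewrite setTI; apply: open_measurable_borel.
by move: gc => /continuousP; apply; exact: interval_open.
Qed.

Variable H : X -> R.
Hypotheses (Hcont : continuous H) (H_ge0 : forall y, 0 <= H y).

Let positive := [set y : X | 0 < H y].
Let superlevel (m : nat) := [set y : X | 1 < m.+1%:R * H y].

Let continuous_scaleH (m : nat) : continuous (fun y => m.+1%:R * H y).
Proof.
move=> y; apply: (continuousM (s := fun=> m.+1%:R) (t := H)).
  exact: cst_continuous.
exact: Hcont.
Qed.

Let open_superlevel m : open (superlevel m).
Proof. exact: (continuousP _).1 (continuous_scaleH m) _ (@open_gt R 1). Qed.

Let open_positive : open positive.
Proof. exact: (continuousP _).1 Hcont _ (@open_gt R 0). Qed.

Lemma lt_measure_superlevel (t : \bar R) :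
  (t < nu positive)%E -> exists m, (t < nu (superlevel m))%E.
Proof.
have nd_superlevel : nondecreasing_seq (superlevel : nat -> set (borel X)).
  move=> m k mk; apply/subsetPset => y /= Hy; apply: lt_le_trans Hy _.
  by apply: ler_wpM2r; rewrite ?ler_nat.
have union : \bigcup_m superlevel m = positive.
  apply/seteqP; split=> y /=.
    move=> [m _]; rewrite /superlevel /positive /= => Hy.
    rewrite lt_def H_ge0 andbT; apply: contraTneq Hy => ->.
    by rewrite mulr0 ltr10.
  move=> Hy; exists (Num.truncn (H y)^-1) => //.
  by rewrite /superlevel /= -ltr_pdivrMr // div1r truncnS_gt.
move=> t_lt; have := nondecreasing_cvg_mu (mu := nu)
  (fun m => open_measurable_borel (open_superlevel m)) _ nd_superlevel.
rewrite union => /(_ (open_measurable_borel open_positive)) nu_cvg.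
have [m _ t_lt_m] := nu_cvg _ (open_ereal_gt' t_lt).
by exists m; exact: t_lt_m m (leqnn m).
Qed.

Lemma continuous_minorant (t : \bar R) : (t < nu positive)%E ->
  exists g : X -> R, [/\ continuous g, forall y, 0 <= g y,
    forall y, g y <= \1_positive y & (t < \int[nu]_(x in setT) (g x)%:E)%E].
Proof.
move=> /lt_measure_superlevel[m t_lt].
pose g y := Num.min 1 (m.+1%:R * H y).
have g_ge0 y : 0 <= g y by rewrite le_min ler01 mulr_ge0.
have gc : continuous g.
  move=> y; apply: (@continuous_min R X (fun=> 1) (fun y => m.+1%:R * H y)).
    exact: cst_continuous.
  exact: continuous_scaleH.
exists g; split => // [y|].
  rewrite indicE; have [_|] := boolP (y \in positive).
    by rewrite ge_min lexx.
  rewrite notin_setE => /negP; rewrite -leNgt => Hy_le0.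
  by rewrite ge_min pmulr_rle0 // Hy_le0 orbT.
apply: (lt_le_trans t_lt); apply: measure_le_integral.
- exact: open_measurable_borel (open_superlevel m).
- exact: continuous_measurable_borel.
- move=> y; rewrite indicE; have [|_] := boolP (y \in superlevel m) => //.
  by rewrite inE le_min lexx => /ltW.
Qed.

End continuous_minorant.

Section N_cover.
Context {R : realType} {X : ptMetricType R} {f : X -> X} {n : nat}.
Context {eps delta : R}.

Lemma N_cover_le_size (mu : probability (borel X) R) (s : seq X) :
  ((1 - delta)%:E < mu (bowen_cover f n eps s))%E ->
  N_cover f n eps delta mu <= (size s)%:R.
Proof. by move=> s_cov; apply: ge_inf; [exists 0 => _ [t _ <-] | exists s]. Qed.

Lemma N_cover_lt_witness (nu : probability (borel X) R) (c : R) :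
  compact [set: X] -> continuous f -> 0 < eps -> 0 < delta ->
  N_cover f n eps delta nu < c ->
  exists2 s, ((1 - delta)%:E < nu (bowen_cover f n eps s))%E & (size s)%:R < c.
Proof.
move=> Xcompact fcont eps_gt0 delta_gt0 N_lt_c.
have [s sT] := compact_bowen_cover f n eps fcont eps_gt0 Xcompact.
have s_cov : ((1 - delta)%:E < nu (bowen_cover f n eps s))%E.
  by rewrite sT probability_setT lte_fin gtrBl.
have [|_ [s' s'_cov <-] s'_lt_c] := inf_lt _ N_lt_c.
  by exists (size s)%:R, s.
by exists s'.
Qed.

End N_cover.

Theorem lemma4p3 (R : realType) (X : ptMetricType R) (f : X -> X)
    (Xcompact : compact [set: X]) (fcont : continuous f)
    (eps delta : R) (n : nat)
    (eps_gt0 : 0 < eps) (delta_gt0 : 0 < delta) (delta_lt1 : delta < 1) :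
  forall nu : probability (borel X) R, f_ergodic f nu ->
  forall c : R, N_cover f n eps delta nu < c ->
  exists (k : nat) (g : 'I_k -> X -> R) (e : R),
    0 < e /\ (forall i, continuous (g i)) /\
    forall mu : probability (borel X) R, f_ergodic f mu ->
      weak_star_basic_nbhs nu g e mu -> N_cover f n eps delta mu < c.
Proof.
move=> nu _ c N_lt_c.
have [s s_cov s_lt_c] :=
  N_cover_lt_witness nu c Xcompact fcont eps_gt0 delta_gt0 N_lt_c.
have depth_cont := continuous_bowen_depth f n eps fcont s.
have cover_open := open_bowen_cover f n eps fcont eps_gt0 s.
have coverE := bowen_coverE f n eps eps_gt0 s.
rewrite coverE in s_cov cover_open.
have [g [gc g_ge0 g_le1 g_nu]] :=
  continuous_minorant nu _ depth_cont (bowen_depth_ge0 f n eps s) _ s_cov.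
have [e e_gt0 close] := lt_probability_of_close_integral nu
  (open_measurable_borel cover_open) (continuous_measurable_borel gc)
  g_ge0 g_le1 g_nu.
exists 1, (fun=> g), e; split=> //; split=> // mu _ /(_ ord0) /close mu_cov.
by apply: le_lt_trans s_lt_c; apply: N_cover_le_size; rewrite coverE.
Qed.
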